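(* Let $n\in\mathbb{N}$, let $M\models\mathrm{I}\Delta_0+\exp$, let $K\models\mathrm{I}\Sigma_n+\exp$, and suppose $M\subseteq_{\mathrm{e}}K$. The following are equivalent: (i) $K\models M\text{-}\mathrm{I}\Sigma_{n+1}$; (ii) for every $\Sigma_{n+1}$ formula $\phi(x)$ with parameters from $K$ and every $a\in M$, $K\models\exists c\,\forall x<a\,(\phi(x)\leftrightarrow x\in c)$; (iii) for every $\Pi_n$ formula $\theta(x,y)$ with parameters from $K$ and every $a\in M$, $K\models\exists b\,\forall x<a\,(\exists y\,\theta(x,y)\leftrightarrow\exists y<b\,\theta(x,y))$.
   Context: $M\subseteq_{\mathrm{e}}K$ means $K$ is an end extension of $M$ (every element of $K\setminus M$ exceeds every element of $M$). For $M\subseteq_{\mathrm{e}}K$ models of $\mathrm{I}\Delta_0+\exp$, $K\models M\text{-}\mathrm{I}\Sigma_{n+1}$ means: for every $\Sigma_{n+1}$ formula $\phi(x)$ with parameters from $K$ and every $a\in M$, $K\models \phi(0)\wedge\forall x<a(\phi(x)\to\phi(x+1))\to\forall x<a\,\phi(x)$. For elements $x,c$, ''$x\in c$'' means that the $x$-th digit of the binary expansion of $c$ is $1$. *)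

Set Implicit Arguments.


Inductive term : Type :=
| Var (i : nat)
| Zero
| One
| Add (s t : term)
| Mul (s t : term).

(* Binders (All, Ex, BAll, BEx) bind de Bruijn variable 0.
   [BAll t phi] is  (forall x < t) phi  and [BEx t phi] is (exists x < t) phi,
   where the bound [t] is interpreted OUTSIDE the binder. *)
Inductive formula : Type :=
| Eq (s t : term)
| Lt (s t : term)
| Not (p : formula)
| And (p q : formula)
| Or (p q : formula)
| Imp (p q : formula)
| All (p : formula)
| Ex (p : formula)
| BAll (t : term) (p : formula)
| BEx (t : term) (p : formula).

Fixpoint isDelta0 (p : formula) : Prop :=
  match p with
  | Eq _ _ | Lt _ _ => True
  | Not q => isDelta0 q
  | And q r | Or q r | Imp q r => isDelta0 q /\ isDelta0 r
  | All _ | Ex _ => False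
  | BAll _ q | BEx _ q => isDelta0 q
  end.

Inductive Sigma : nat -> formula -> Prop :=
| Sigma_D0 p : isDelta0 p -> Sigma 0 p
| Sigma_Pi n p : Pi n p -> Sigma (S n) p
| Sigma_Ex n p : Sigma (S n) p -> Sigma (S n) (Ex p)
with Pi : nat -> formula -> Prop :=
| Pi_D0 p : isDelta0 p -> Pi 0 p
| Pi_Sigma n p : Sigma n p -> Pi (S n) p
| Pi_All n p : Pi (S n) p -> Pi (S n) (All p).

Fixpoint term_fv_lt (k : nat) (t : term) : Prop :=
  match t with
  | Var i => i < k
  | Zero | One => True
  | Add s u | Mul s u => term_fv_lt k s /\ term_fv_lt k u
  end.

Fixpoint fv_lt (k : nat) (p : formula) : Prop :=
  match p with
  | Eq s t | Lt s t => term_fv_lt k s /\ term_fv_lt k t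
  | Not q => fv_lt k q
  | And q r | Or q r | Imp q r => fv_lt k q /\ fv_lt k r
  | All q | Ex q => fv_lt (S k) q
  | BAll t q | BEx t q => term_fv_lt k t /\ fv_lt (S k) q
  end.

Record structure : Type := Structure {
  carrier :> Type;
  zero : carrier;
  one : carrier;
  add : carrier -> carrier -> carrier;
  mul : carrier -> carrier -> carrier;
  lt : carrier -> carrier -> Prop
}.

Arguments zero {s}.
Arguments one {s}.
Arguments add {s}.
Arguments mul {s}.
Arguments lt {s}.

Definition le {K : structure} (x y : K) : Prop := lt x y \/ x = y.

Definition scons {A : Type} (x : A) (env : nat -> A) : nat -> A :=
  fun i => match i with 0 => x | S j => env j end.

Fixpoint eval {K : structure} (env : nat -> K) (t : term) : K :=
  match t with
  | Var i => env i
  | Zero => zero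
  | One => one
  | Add s u => add (eval env s) (eval env u)
  | Mul s u => mul (eval env s) (eval env u)
  end.

Fixpoint sat {K : structure} (env : nat -> K) (p : formula) : Prop :=
  match p with
  | Eq s t => eval env s = eval env t
  | Lt s t => lt (eval env s) (eval env t)
  | Not q => ~ sat env q
  | And q r => sat env q /\ sat env r
  | Or q r => sat env q \/ sat env r
  | Imp q r => sat env q -> sat env r
  | All q => forall x : K, sat (scons x env) q
  | Ex q => exists x : K, sat (scons x env) q
  | BAll t q => forall x : K, lt x (eval env t) -> sat (scons x env) q
  | BEx t q => exists x : K, lt x (eval env t) /\ sat (scons x env) q
  end.

(** PA^- : nonnegative parts of discretely ordered commutative rings (Kaye). *)
Definition PAminus (K : structure) : Prop :=
  (forall x y z : K, add (add x y) z = add x (add y z)) /\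
  (forall x y : K, add x y = add y x) /\
  (forall x y z : K, mul (mul x y) z = mul x (mul y z)) /\
  (forall x y : K, mul x y = mul y x) /\
  (forall x y z : K, mul x (add y z) = add (mul x y) (mul x z)) /\
  (forall x : K, add x zero = x) /\
  (forall x : K, mul x zero = zero) /\
  (forall x : K, mul x one = x) /\
  (forall x y z : K, lt x y -> lt y z -> lt x z) /\
  (forall x : K, ~ lt x x) /\
  (forall x y : K, lt x y \/ x = y \/ lt y x) /\
  (forall x y z : K, lt x y -> lt (add x z) (add y z)) /\
  (forall x y z : K, lt zero z -> lt x y -> lt (mul x z) (mul y z)) /\
  (forall x y : K, lt x y -> exists z, add x z = y) /\
  (lt (@zero K) one) /\
  (forall x : K, lt zero x -> le one x) /\
  (forall x : K, le zero x).

Definition ISigma_scheme (n : nat) (K : structure) : Prop :=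
  forall (p : formula), Sigma n p -> forall env : nat -> K,
    sat (scons zero env) p ->
    (forall x : K, sat (scons x env) p -> sat (scons (add x one) env) p) ->
    forall x : K, sat (scons x env) p.

Definition ISigma (n : nat) (K : structure) : Prop :=
  PAminus K /\ ISigma_scheme n K.

Definition IDelta0 (K : structure) : Prop := ISigma 0 K.

(** Exponentiation.  [E] is a parameter-free Delta_0 formula in the two
    variables x := Var 0, y := Var 1, read as "y = 2^x".  [ExpGraph K E]
    says that, in K, E satisfies the defining recursion of x |-> 2^x and is
    functional (these are theorems of I Delta_0 for the standard Delta_0
    definition of exponentiation);  [ExpTotal K E] is the axiom exp:
    forall x exists y, y = 2^x. *)
Definition Exp_at {K : structure} (E : formula) (x y : K) : Prop :=
  sat (scons x (scons y (fun _ => zero))) E.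

Definition ExpGraph (K : structure) (E : formula) : Prop :=
  Exp_at E (@zero K) one /\
  (forall x y : K, Exp_at E x y -> Exp_at E (add x one) (add y y)) /\
  (forall x y y' : K, Exp_at E x y -> Exp_at E x y' -> y = y').

Definition ExpTotal (K : structure) (E : formula) : Prop :=
  forall x : K, exists y : K, Exp_at E x y.

Definition ExpFormula (E : formula) : Prop := isDelta0 E /\ fv_lt 2 E.

(** "x \in c": the x-th binary digit of c is 1, i.e. c = q*2^(x+1) + 2^x + r
    with r < 2^x. *)
Definition bitin {K : structure} (E : formula) (x c : K) : Prop :=
  exists p : K, Exp_at E x p /\
    exists q r : K, c = add (add (mul q (add p p)) p) r /\ lt r p.

Definition end_extension (M K : structure) (f : M -> K) : Prop :=
  (forall x y : M, f x = f y -> x = y) /\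
  f zero = zero /\ f one = one /\
  (forall x y : M, f (add x y) = add (f x) (f y)) /\
  (forall x y : M, f (mul x y) = mul (f x) (f y)) /\
  (forall x y : M, lt x y <-> lt (f x) (f y)) /\
  (forall (m : M) (k : K), lt k (f m) -> exists m' : M, f m' = k).

Definition M_ISigma (n : nat) (M K : structure) (f : M -> K) : Prop :=
  forall (p : formula), Sigma n p -> forall (env : nat -> K) (a : M),
    sat (scons zero env) p ->
    (forall x : K, lt x (f a) -> sat (scons x env) p -> sat (scons (add x one) env) p) ->
    forall x : K, lt x (f a) -> sat (scons x env) p.
Arguments end_extension : clear implicits.
Arguments M_ISigma : clear implicits.

(* Throughout, I Sigma_n shows that Sigma_k and Pi_k (k <= n) absorb bounded
   quantifiers (via Sigma_k collection), so every Sigma_{n+1} formula is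
   equivalent to [exists w, theta] with theta Pi_n, and Pi_n induction holds.

   (i) => (ii), (iii): given theta Pi_n and a in M, M-bounded Sigma_{n+1}
   induction yields the largest c < 2^a such that every bit x < a of c has a
   witness y with theta(x, y) below a common bound b.  By maximality, every
   x < a with a witness is a bit of c, since setting bit x would give a larger
   such c.  So c codes the set and b is a collection bound.

   (ii) => (i): induction for a coded set is Delta_0 induction on its code.

   (iii) => (i): with a collection bound, the Sigma_{n+1} formula agrees on
   [0, a] with a Pi_n formula, and Pi_n induction applies. *)

From Stdlib Require Import Ring Classical Lia Setoid.

Existing Class PAminus.

(** * Discretely ordered semirings *)

Section PAminus_theory.
Context {K : structure} {HK : PAminus K}.

Lemma PAminus_semiring : semi_ring_theory (@zero K) one add mul eq.
Proof.
destruct HK as (addA & addC & mulA & mulC & mulDr & add0 & mul0 & mul1 & _).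
constructor.
- intros x; rewrite addC; apply add0.
- exact addC.
- intros; symmetry; apply addA.
- intros x; rewrite mulC; apply mul1.
- intros x; rewrite mulC; apply mul0.
- exact mulC.
- intros; symmetry; apply mulA.
- intros x y z; rewrite mulC, mulDr, (mulC z), (mulC z); reflexivity.
Qed.
Add Ring PAminus_ring : PAminus_semiring.

Lemma lt_trans (x y z : K) : lt x y -> lt y z -> lt x z.
Proof. destruct HK as (_&_&_&_&_&_&_&_&h&_). apply h. Qed.
Lemma lt_irrefl (x : K) : ~ lt x x.
Proof. destruct HK as (_&_&_&_&_&_&_&_&_&h&_). apply h. Qed.
Lemma lt_trichotomy (x y : K) : lt x y \/ x = y \/ lt y x.
Proof. destruct HK as (_&_&_&_&_&_&_&_&_&_&h&_). apply h. Qed.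
Lemma add_lt_mono_r (x y z : K) : lt x y -> lt (add x z) (add y z).
Proof. destruct HK as (_&_&_&_&_&_&_&_&_&_&_&h&_). apply h. Qed.
Lemma mul_lt_mono_pos_r (x y z : K) : lt zero z -> lt x y -> lt (mul x z) (mul y z).
Proof. destruct HK as (_&_&_&_&_&_&_&_&_&_&_&_&h&_). apply h. Qed.
Lemma lt_exists_add (x y : K) : lt x y -> exists z, add x z = y.
Proof. destruct HK as (_&_&_&_&_&_&_&_&_&_&_&_&_&h&_). apply h. Qed.
Lemma lt_0_1 : lt (@zero K) one.
Proof. destruct HK as (_&_&_&_&_&_&_&_&_&_&_&_&_&_&h&_). apply h. Qed.
Lemma pos_ge_1 (x : K) : lt zero x -> le one x.
Proof. destruct HK as (_&_&_&_&_&_&_&_&_&_&_&_&_&_&_&h&_). apply h. Qed.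
Lemma le_0_l (x : K) : le zero x.
Proof. destruct HK as (_&_&_&_&_&_&_&_&_&_&_&_&_&_&_&_&h). apply h. Qed.

Lemma le_refl (x : K) : le x x.
Proof. now right. Qed.
Lemma lt_le_incl (x y : K) : lt x y -> le x y.
Proof. now left. Qed.
Lemma le_trans (x y z : K) : le x y -> le y z -> le x z.
Proof. intros [h|<-] [h'|<-]; eauto using lt_le_incl, lt_trans, le_refl. Qed.
Lemma lt_le_trans (x y z : K) : lt x y -> le y z -> lt x z.
Proof. intros h [h'|<-]; eauto using lt_trans. Qed.
Lemma le_lt_trans (x y z : K) : le x y -> lt y z -> lt x z.
Proof. intros [h|<-] h'; eauto using lt_trans. Qed.
Lemma le_gt_cases (x y : K) : le x y \/ lt y x.
Proof. unfold le. destruct (lt_trichotomy x y) as [h|[h|h]]; auto. Qed.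
Lemma not_lt_le (x y : K) : ~ lt y x -> le x y.
Proof. destruct (le_gt_cases x y); tauto. Qed.
Lemma le_not_lt (x y : K) : le x y -> ~ lt y x.
Proof. intros h h'. apply (lt_irrefl x). eapply le_lt_trans; eauto. Qed.
Lemma not_lt_0 (x : K) : ~ lt x zero.
Proof. apply le_not_lt, le_0_l. Qed.
Lemma le_exists_add (x y : K) : le x y -> exists z, add x z = y.
Proof. intros [h|<-]. now apply lt_exists_add. exists zero; ring. Qed.

Lemma add_lt_mono_l (x y z : K) : lt x y -> lt (add z x) (add z y).
Proof. intros h. rewrite !(SRadd_comm PAminus_semiring z). now apply add_lt_mono_r. Qed.
Lemma add_le_mono_r (x y z : K) : le x y -> le (add x z) (add y z).
Proof. intros [h|<-]; [left; now apply add_lt_mono_r|apply le_refl]. Qed.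
Lemma add_le_mono_l (x y z : K) : le x y -> le (add z x) (add z y).
Proof. intros [h|<-]; [left; now apply add_lt_mono_l|apply le_refl]. Qed.
Lemma add_le_mono (x y u v : K) : le x y -> le u v -> le (add x u) (add y v).
Proof. intros h h'. eapply le_trans; [apply add_le_mono_r, h|apply add_le_mono_l, h']. Qed.
Lemma add_lt_cancel_r (x y z : K) : lt (add x z) (add y z) -> lt x y.
Proof.
intros h. apply NNPP; intros h'.
apply (le_not_lt _ _ (add_le_mono_r _ _ z (not_lt_le _ _ h')) h).
Qed.
Lemma add_cancel_r (x y z : K) : add x z = add y z -> x = y.
Proof.
intros h. destruct (lt_trichotomy x y) as [l|[e|l]]; auto; exfalso;
  apply (lt_irrefl (add x z)); [rewrite h at 2|rewrite h at 1]; now apply add_lt_mono_r.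
Qed.
Lemma add_cancel_l (x y z : K) : add z x = add z y -> x = y.
Proof. rewrite !(SRadd_comm PAminus_semiring z). apply add_cancel_r. Qed.
Lemma lt_add_pos_r (x y : K) : lt zero y -> lt x (add x y).
Proof. intros h. rewrite <- (SRadd_0_l PAminus_semiring x) at 1.
 rewrite (SRadd_comm PAminus_semiring zero). now apply add_lt_mono_l. Qed.
Lemma le_add_r (x y : K) : le x (add x y).
Proof. destruct (le_0_l y) as [h|<-]. left; now apply lt_add_pos_r. right; ring. Qed.
Lemma le_add_l (x y : K) : le x (add y x).
Proof. rewrite (SRadd_comm PAminus_semiring); apply le_add_r. Qed.
Lemma lt_succ_diag_r (x : K) : lt x (add x one).
Proof. apply lt_add_pos_r, lt_0_1. Qed.
Lemma le_succ_l (x y : K) : lt x y -> le (add x one) y.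
Proof.
intros h. destruct (lt_exists_add _ _ h) as [z <-]. apply add_le_mono_l, pos_ge_1.
destruct (le_0_l z) as [hz|<-]; auto.
exfalso. rewrite (SRadd_comm PAminus_semiring), (SRadd_0_l PAminus_semiring) in h.
apply (lt_irrefl _ h).
Qed.
Lemma lt_succ_r (x y : K) : lt x (add y one) -> le x y.
Proof. intros h. apply not_lt_le. intros h'. apply (le_not_lt _ _ (le_succ_l _ _ h') h). Qed.
Lemma le_lt_succ (x y : K) : le x y -> lt x (add y one).
Proof. intros h. eapply le_lt_trans; eauto using lt_succ_diag_r. Qed.
Lemma lt_lt_succ (x y : K) : lt x y -> lt x (add y one).
Proof. intros h. now apply le_lt_succ, lt_le_incl. Qed.
Lemma lt_succ_lt (x y : K) : lt (add x one) y -> lt x y.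
Proof. apply lt_trans, lt_succ_diag_r. Qed.
Lemma pos_succ (u : K) : lt zero u -> exists u', u = add u' one.
Proof.
intros h. destruct (le_exists_add _ _ (pos_ge_1 _ h)) as [z <-]. exists z; ring.
Qed.
Lemma mul_le_mono_r (x y z : K) : le x y -> le (mul x z) (mul y z).
Proof.
intros [h|<-]; [|apply le_refl].
destruct (le_0_l z) as [hz|<-]. left; now apply mul_lt_mono_pos_r. right; ring.
Qed.
Lemma le_mul_pos_r (x z : K) : lt zero z -> le x (mul x z).
Proof.
intros h. replace x with (mul x one) at 1 by ring.
rewrite !(SRmul_comm PAminus_semiring x). now apply mul_le_mono_r, pos_ge_1.
Qed.

End PAminus_theory.

(** * Renaming and the arithmetical hierarchy *)

Definition up_ren (r : nat -> nat) : nat -> nat :=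
  fun v => match v with 0 => 0 | S v => S (r v) end.

Fixpoint ren_term (r : nat -> nat) (t : term) : term :=
  match t with
  | Var i => Var (r i)
  | Zero => Zero
  | One => One
  | Add s u => Add (ren_term r s) (ren_term r u)
  | Mul s u => Mul (ren_term r s) (ren_term r u)
  end.

Fixpoint ren (r : nat -> nat) (p : formula) : formula :=
  match p with
  | Eq s t => Eq (ren_term r s) (ren_term r t)
  | Lt s t => Lt (ren_term r s) (ren_term r t)
  | Not q => Not (ren r q)
  | And q s => And (ren r q) (ren r s)
  | Or q s => Or (ren r q) (ren r s)
  | Imp q s => Imp (ren r q) (ren r s)
  | All q => All (ren (up_ren r) q)
  | Ex q => Ex (ren (up_ren r) q)
  | BAll t q => BAll (ren_term r t) (ren (up_ren r) q)
  | BEx t q => BEx (ren_term r t) (ren (up_ren r) q)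
  end.

Section Semantics.
Variable K : structure.

Lemma eval_ext (e e' : nat -> K) t : (forall v, e v = e' v) -> eval e t = eval e' t.
Proof. intros h; induction t; simpl; congruence. Qed.

Lemma sat_ext p : forall (e e' : nat -> K), (forall v, e v = e' v) -> (sat e p <-> sat e' p).
Proof.
induction p; intros e e' h; simpl; repeat rewrite (eval_ext e e' _ h); try reflexivity;
  try (pose proof (IHp e e' h); tauto);
  try (pose proof (IHp1 e e' h); pose proof (IHp2 e e' h); tauto);
  assert (IH : forall x, sat (scons x e) p <-> sat (scons x e') p)
    by (intros x; apply IHp; intros [|v]; simpl; auto);
  firstorder.
Qed.

Lemma eval_ren (e : nat -> K) r t : eval e (ren_term r t) = eval (fun v => e (r v)) t.
Proof. induction t; simpl; congruence. Qed.

Lemma sat_ren p : forall r (e : nat -> K), sat e (ren r p) <-> sat (fun v => e (r v)) p.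
Proof.
induction p; intros r e; simpl; rewrite ?eval_ren, ?IHp, ?IHp1, ?IHp2; try tauto;
  assert (IH : forall x, sat (scons x e) (ren (up_ren r) p) <-> sat (scons x (fun v => e (r v))) p)
    by (intros x; rewrite IHp; apply sat_ext; intros [|v]; reflexivity);
  firstorder.
Qed.

Lemma sat_shift (x : K) e p : sat (scons x e) (ren S p) <-> sat e p.
Proof. rewrite sat_ren. apply sat_ext. reflexivity. Qed.

Lemma eval_agree k t (e e' : nat -> K) :
  term_fv_lt k t -> (forall v, v < k -> e v = e' v) -> eval e t = eval e' t.
Proof. induction t; simpl; intros H h; auto; f_equal; tauto. Qed.

Lemma sat_agree p : forall k (e e' : nat -> K),
  fv_lt k p -> (forall v, v < k -> e v = e' v) -> (sat e p <-> sat e' p).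
Proof.
induction p; intros k e e' H h; simpl in *;
  repeat match goal with
  | H : _ /\ _ |- _ => destruct H
  | H : term_fv_lt _ ?t |- _ => rewrite (eval_agree k t e e' H h); clear H
  end; try reflexivity;
  try (pose proof (IHp k e e' H h); tauto);
  try (pose proof (IHp1 k e e' H h); pose proof (IHp2 k e e' H0 h); tauto);
  assert (IH : forall x, sat (scons x e) p <-> sat (scons x e') p)
    by (intros x; apply (IHp (S k)); auto; intros [|v] hv; simpl; auto; apply h; lia);
  firstorder.
Qed.

End Semantics.

Scheme Sigma_ind' := Induction for Sigma Sort Prop
with Pi_ind' := Induction for Pi Sort Prop.
Combined Scheme Sigma_Pi_ind from Sigma_ind', Pi_ind'.

Lemma Delta0_ren p : forall r, isDelta0 p -> isDelta0 (ren r p).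
Proof. induction p; simpl; intros r H; try tauto; try (destruct H; split); auto. Qed.

Lemma Sigma_Pi_ren :
  (forall k p, Sigma k p -> forall r, Sigma k (ren r p)) /\
  (forall k p, Pi k p -> forall r, Pi k (ren r p)).
Proof.
apply Sigma_Pi_ind; intros; simpl;
  solve [constructor; auto using Delta0_ren | apply Sigma_Pi; auto | apply Pi_Sigma; auto].
Qed.

Lemma Sigma_Pi_succ :
  (forall k p, Sigma k p -> Sigma (S k) p) /\ (forall k p, Pi k p -> Pi (S k) p).
Proof.
apply Sigma_Pi_ind; intros.
- apply Sigma_Pi, Pi_D0; auto.
- apply Sigma_Pi; auto.
- apply Sigma_Ex; auto.
- apply Pi_Sigma, Sigma_D0; auto.
- apply Pi_Sigma; auto.
- apply Pi_All; auto.
Qed.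

Lemma Sigma_le k m p : k <= m -> Sigma k p -> Sigma m p.
Proof. induction 1; auto. intros; apply Sigma_Pi_succ; auto. Qed.

Lemma Sigma_0_Delta0 p : Sigma 0 p <-> isDelta0 p.
Proof. split; [inversion 1; auto|constructor; auto]. Qed.

Fixpoint neg (p : formula) : formula :=
  match p with
  | Ex q => All (neg q)
  | All q => Ex (neg q)
  | _ => Not p
  end.

Lemma Sigma_Pi_neg :
  (forall k p, Sigma k p -> Pi k (neg p)) /\ (forall k p, Pi k p -> Sigma k (neg p)).
Proof.
assert (hD : forall p, isDelta0 p -> neg p = Not p) by (destruct p; simpl; tauto).
apply Sigma_Pi_ind; intros; simpl.
- rewrite hD; auto. now constructor.
- now apply Pi_Sigma.
- now apply Pi_All.
- rewrite hD; auto. now constructor.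
- now apply Sigma_Pi.
- now apply Sigma_Ex.
Qed.

Lemma sat_neg (K : structure) p : forall (e : nat -> K), sat e (neg p) <-> ~ sat e p.
Proof.
induction p; intros e; simpl; try tauto.
- setoid_rewrite IHp. split; [firstorder|apply not_all_ex_not].
- setoid_rewrite IHp. firstorder.
Qed.

Fixpoint exs (d : nat) (p : formula) : formula :=
  match d with 0 => p | S d => Ex (exs d p) end.

Lemma Sigma_succ_exs k p : Sigma (S k) p -> exists d q, Pi k q /\ p = exs d q.
Proof.
induction p; intros h; inversion h as [|? ? hq|? ? hq]; subst; try (exists 0; eauto; fail).
destruct (IHp hq) as (d & q & hq' & ->). now exists (S d), q.
Qed.

(** * Definable predicates *)

Section Definability.
Variable K : structure.

Definition definable (C : formula -> Prop) (Q : (nat -> K) -> Prop) : Prop :=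
  exists p, C p /\ forall e, sat e p <-> Q e.

Definition bex (t : term) (Q : (nat -> K) -> Prop) (e : nat -> K) : Prop :=
  exists x, lt x (eval e t) /\ Q (scons x e).

Definition ball (t : term) (Q : (nat -> K) -> Prop) (e : nat -> K) : Prop :=
  forall x, lt x (eval e t) -> Q (scons x e).

Definition bounded_closed (C : formula -> Prop) : Prop :=
  forall t Q, definable C Q -> definable C (bex t Q) /\ definable C (ball t Q).

Lemma bounded_closed_bex C t Q : bounded_closed C -> definable C Q -> definable C (bex t Q).
Proof. intros hC hQ; now apply hC. Qed.

Lemma bounded_closed_ball C t Q : bounded_closed C -> definable C Q -> definable C (ball t Q).
Proof. intros hC hQ; now apply hC. Qed.

Lemma definable_ext C Q Q' : definable C Q -> (forall e, Q e <-> Q' e) -> definable C Q'.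
Proof. intros (p & hp & h) h'. exists p; split; auto. intros e; rewrite h; auto. Qed.

Lemma definable_env_ext C Q (e e' : nat -> K) :
  definable C Q -> (forall v, e v = e' v) -> (Q e <-> Q e').
Proof. intros (p & _ & h) he. rewrite <- !h. now apply sat_ext. Qed.

Lemma definable_sat (C : formula -> Prop) p : C p -> definable C (fun e => sat e p).
Proof. intros h; exists p; split; auto; tauto. Qed.

Lemma definable_mono (C C' : formula -> Prop) Q :
  (forall p, C p -> C' p) -> definable C Q -> definable C' Q.
Proof. intros hC (p & hp & h). exists p; auto. Qed.

Lemma definable_ren (C : formula -> Prop) r Q : (forall p, C p -> C (ren r p)) ->
  definable C Q -> definable C (fun e => Q (fun v => e (r v))).
Proof. intros hC (p & hp & h). exists (ren r p); split; auto. intros e; rewrite sat_ren; auto. Qed.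

Lemma Sigma_definable_ren k r Q :
  definable (Sigma k) Q -> definable (Sigma k) (fun e => Q (fun v => e (r v))).
Proof. apply definable_ren. intros; now apply Sigma_Pi_ren. Qed.

Lemma Pi_definable_ren k r Q :
  definable (Pi k) Q -> definable (Pi k) (fun e => Q (fun v => e (r v))).
Proof. apply definable_ren. intros; now apply Sigma_Pi_ren. Qed.

Lemma Sigma_of_Pi k Q : definable (Pi k) Q -> definable (Sigma (S k)) Q.
Proof. apply definable_mono. intros; now apply Sigma_Pi. Qed.

Lemma Pi_of_Sigma k Q : definable (Sigma k) Q -> definable (Pi (S k)) Q.
Proof. apply definable_mono. intros; now apply Pi_Sigma. Qed.

Lemma Delta0_bounded_closed : bounded_closed isDelta0.
Proof.
intros t Q (p & hp & h). split; [exists (BEx t p)|exists (BAll t p)]; split; auto;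
  intros e; simpl; unfold bex, ball; now setoid_rewrite h.
Qed.

Lemma Delta0_bex t Q : definable isDelta0 Q -> definable isDelta0 (bex t Q).
Proof. apply bounded_closed_bex, Delta0_bounded_closed. Qed.

Lemma Delta0_ball t Q : definable isDelta0 Q -> definable isDelta0 (ball t Q).
Proof. apply bounded_closed_ball, Delta0_bounded_closed. Qed.

Lemma Sigma_0_definable Q : definable (Sigma 0) Q <-> definable isDelta0 Q.
Proof. split; apply definable_mono; intros p; apply Sigma_0_Delta0. Qed.

Lemma Delta0_eq s t : definable isDelta0 (fun e => eval e s = eval e t).
Proof. now apply (definable_sat isDelta0 (Eq s t)). Qed.

Lemma Delta0_lt s t : definable isDelta0 (fun e => lt (eval e s) (eval e t)).
Proof. now apply (definable_sat isDelta0 (Lt s t)). Qed.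

Lemma Delta0_le s t : definable isDelta0 (fun e => le (eval e s) (eval e t)).
Proof. exists (Or (Lt s t) (Eq s t)); split; simpl; [tauto|reflexivity]. Qed.

Lemma Delta0_not Q : definable isDelta0 Q -> definable isDelta0 (fun e => ~ Q e).
Proof. intros (p & hp & h); exists (Not p); split; simpl; auto. intros e; rewrite h; tauto. Qed.

Lemma Delta0_and Q1 Q2 :
  definable isDelta0 Q1 -> definable isDelta0 Q2 -> definable isDelta0 (fun e => Q1 e /\ Q2 e).
Proof.
intros (p & hp & h) (q & hq & h'); exists (And p q); split; simpl; auto.
intros e; rewrite h, h'; tauto.
Qed.

Lemma Delta0_imp Q1 Q2 :
  definable isDelta0 Q1 -> definable isDelta0 Q2 -> definable isDelta0 (fun e => Q1 e -> Q2 e).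
Proof.
intros (p & hp & h) (q & hq & h'); exists (Imp p q); split; simpl; auto.
intros e; rewrite h, h'; tauto.
Qed.

Lemma Sigma_ex k Q :
  definable (Sigma (S k)) Q -> definable (Sigma (S k)) (fun e => exists x, Q (scons x e)).
Proof.
intros (p & hp & h); exists (Ex p); split. now apply Sigma_Ex.
intros e; simpl. now setoid_rewrite h.
Qed.

Lemma Pi_all k Q :
  definable (Pi (S k)) Q -> definable (Pi (S k)) (fun e => forall x, Q (scons x e)).
Proof.
intros (p & hp & h); exists (All p); split. now apply Pi_All.
intros e; simpl. now setoid_rewrite h.
Qed.

Lemma Sigma_not k Q : definable (Sigma k) Q -> definable (Pi k) (fun e => ~ Q e).
Proof.
intros (p & hp & h); exists (neg p); split. now apply Sigma_Pi_neg.
intros e; rewrite sat_neg, h; tauto.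
Qed.

Lemma Pi_not k Q : definable (Pi k) Q -> definable (Sigma k) (fun e => ~ Q e).
Proof.
intros (p & hp & h); exists (neg p); split. now apply Sigma_Pi_neg.
intros e; rewrite sat_neg, h; tauto.
Qed.

(* The Delta_0 formula is pushed under the quantifier prefix; this uses that
   the domain is nonempty ([zero]). *)
Lemma Sigma_Pi_and_or_Delta0 :
  (forall k p, Sigma k p -> forall d, isDelta0 d ->
     definable (Sigma k) (fun e => sat e d /\ sat e p) /\
     definable (Sigma k) (fun e => sat e d \/ sat e p)) /\
  (forall k p, Pi k p -> forall d, isDelta0 d ->
     definable (Pi k) (fun e => sat e d /\ sat e p) /\
     definable (Pi k) (fun e => sat e d \/ sat e p)).
Proof.
apply Sigma_Pi_ind; intros.
- split; [exists (And d p)|exists (Or d p)]; split; simpl; try tauto; now constructor.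
- destruct (H d H0); split; now apply Sigma_of_Pi.
- destruct (H (ren S d) (Delta0_ren d S H0)) as [Hand Hor].
  apply Sigma_ex in Hand, Hor. split.
  + eapply definable_ext; [exact Hand|intros e; simpl; setoid_rewrite sat_shift; firstorder].
  + eapply definable_ext; [exact Hor|intros e; simpl; setoid_rewrite sat_shift].
    split; [intros [x [hd|hp]]; [now left|right; now exists x]|].
    intros [hd|[x hp]]; [exists zero; now left|exists x; now right].
- split; [exists (And d p)|exists (Or d p)]; split; simpl; try tauto; now constructor.
- destruct (H d H0); split; now apply Pi_of_Sigma.
- destruct (H (ren S d) (Delta0_ren d S H0)) as [Hand Hor].
  apply Pi_all in Hand, Hor. split.
  + eapply definable_ext; [exact Hand|intros e; simpl; setoid_rewrite sat_shift].
    split; [intros h; split; [apply (h zero)|intros x; apply h]|intros [hd hp] x; auto].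
  + eapply definable_ext; [exact Hor|intros e; simpl; setoid_rewrite sat_shift].
    split; [|intros [hd|hp] x; auto].
    intros h. destruct (classic (sat e d)); auto. right; intros x; now destruct (h x).
Qed.

Lemma Sigma_and_Delta0 k D Q : definable isDelta0 D -> definable (Sigma k) Q ->
  definable (Sigma k) (fun e => D e /\ Q e).
Proof.
intros (d & hd & h) (p & hp & h'). eapply definable_ext.
apply (proj1 (proj1 Sigma_Pi_and_or_Delta0 k p hp d hd)). intros e; simpl; now rewrite h, h'.
Qed.

Lemma Sigma_imp_Delta0 k D Q : definable isDelta0 D -> definable (Sigma k) Q ->
  definable (Sigma k) (fun e => D e -> Q e).
Proof.
intros hD (p & hp & h'). apply Delta0_not in hD. destruct hD as (d & hd & h).
eapply definable_ext. apply (proj2 (proj1 Sigma_Pi_and_or_Delta0 k p hp d hd)).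
intros e; simpl; rewrite h, h'. split; [tauto|]. intros H. destruct (classic (D e)); tauto.
Qed.

Lemma Pi_imp_Delta0 k D Q : definable isDelta0 D -> definable (Pi k) Q ->
  definable (Pi k) (fun e => D e -> Q e).
Proof.
intros hD (p & hp & h'). apply Delta0_not in hD. destruct hD as (d & hd & h).
eapply definable_ext. apply (proj2 (proj2 Sigma_Pi_and_or_Delta0 k p hp d hd)).
intros e; simpl; rewrite h, h'. split; [tauto|]. intros H. destruct (classic (D e)); tauto.
Qed.

End Definability.

Arguments bex {K}.
Arguments ball {K}.

Definition skip_vars (j m : nat) (v : nat) : nat := if Nat.ltb v j then v else m + v.

Definition swap01 (v : nat) : nat := match v with 0 => 1 | 1 => 0 | v => v end.

(** * Bounded quantifiers in I Sigma_n *)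

Section Prenex.
Context {K : structure} {HK : PAminus K}.

Lemma lt_0_succ (x : K) : lt zero (add x one).
Proof. eapply le_lt_trans; [apply le_0_l|apply lt_succ_diag_r]. Qed.

Lemma lt_add_succ_l (x y : K) : lt x (add x (add y one)).
Proof. apply lt_add_pos_r, lt_0_succ. Qed.

Lemma lt_add_succ_r (x y : K) : lt y (add x (add y one)).
Proof. eapply lt_le_trans; [apply lt_succ_diag_r|apply le_add_l]. Qed.

(* Two unbounded existentials are merged by bounding both witnesses by their
   sum; this needs Pi_k to absorb bounded existentials. *)
Lemma Sigma_succ_contract k : bounded_closed K (Pi k) ->
  forall Q, definable K (Sigma (S k)) Q ->
  exists R, definable K (Pi k) R /\ forall e, Q e <-> exists w, R (scons w e).
Proof.
intros hPi Q (p & hp & hQ).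
destruct (Sigma_succ_exs k p hp) as (d & q & hq & ->).
enough (H : exists R, definable K (Pi k) R /\
          forall e, sat e (exs d q) <-> exists w, R (scons w e)).
{ destruct H as (R & hR & h). exists R; split; auto. intros e; now rewrite <- hQ. }
clear Q hp hQ. induction d as [|d IH]; simpl.
- exists (fun e => sat (fun v => e (S v)) q). split.
  + apply (Pi_definable_ren K k S (fun e => sat e q)), definable_sat, hq.
  + intros e. split; [intros h; now exists zero|now intros [w h]].
- destruct IH as (R0 & hR0 & h0).
  exists (bex (Var 0) (bex (Var 1) (fun e => R0 (fun v => e (skip_vars 2 1 v))))). split.
  + apply bounded_closed_bex, bounded_closed_bex, Pi_definable_ren; auto.
  + intros e. setoid_rewrite h0. unfold bex; simpl.
    assert (hR0e : forall (w y W : K), R0 (fun v => scons w (scons y (scons W e)) (skip_vars 2 1 v))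
                                       <-> R0 (scons w (scons y e)))
      by (intros; apply (definable_env_ext K (Pi k)); auto; intros [|[|v]]; reflexivity).
    setoid_rewrite hR0e. split.
    * intros (y & w & hw). exists (add y (add w one)), y. split; [apply lt_add_succ_l|].
      exists w. split; [apply lt_add_succ_r|exact hw].
    * intros (W & y & _ & w & _ & hw). eauto.
Qed.

Lemma Pi_bounded_closed_dual k : bounded_closed K (Sigma k) -> bounded_closed K (Pi k).
Proof.
intros hS t Q hQ. destruct (hS t _ (Pi_not K k Q hQ)) as [hex hall].
apply Sigma_not in hex, hall. split.
- eapply definable_ext; [exact hall|]. intros e; unfold ball, bex.
  split; [|firstorder]. intros h. apply NNPP; intros h'. apply h. intros x hx hq. eauto.
- eapply definable_ext; [exact hex|]. intros e; unfold ball, bex.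
  split; [|firstorder]. intros h x hx. apply NNPP; intros h'. eauto.
Qed.

End Prenex.

Section Hierarchy.
Variables (K : structure) (n : nat).
Hypothesis HKn : ISigma n K.
Let HK : PAminus K := proj1 HKn.
Existing Instance HK.
Add Ring K_ring : (@PAminus_semiring K HK).

Lemma ISigma_induction k Q : k <= n -> definable K (Sigma k) Q -> forall e,
  Q (scons zero e) -> (forall x, Q (scons x e) -> Q (scons (add x one) e)) ->
  forall x, Q (scons x e).
Proof.
intros hk (p & hp & h) e H0 HS x. apply h.
apply (proj2 HKn p (Sigma_le k n p hk hp) e); [now apply h|].
intros y hy. now apply h, HS, h.
Qed.

Lemma Sigma_collection k R : S k <= n -> bounded_closed K (Pi k) -> definable K (Pi k) R ->
  forall t e, (forall x, lt x (eval e t) -> exists w, R (scons w (scons x e))) ->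
  exists b, forall x, lt x (eval e t) -> exists w, lt w b /\ R (scons w (scons x e)).
Proof.
intros hk hPi hR t e H.
set (P := fun e' : nat -> K => le (e' 0) (eval (fun v => e' (S v)) t) -> exists b,
  forall x, lt x (e' 0) -> exists w, lt w b /\ R (scons w (scons x (fun v => e' (S v))))).
assert (hP : definable K (Sigma (S k)) P).
{ eapply definable_ext.
  - apply Sigma_imp_Delta0; [apply (Delta0_le K (Var 0) (ren_term S t))|].
    apply Sigma_ex, Sigma_of_Pi, (bounded_closed_ball K _ (Var 1)); [exact hPi|].
    apply (bounded_closed_bex K _ (Var 1)); [exact hPi|].
    exact (Pi_definable_ren K k (skip_vars 2 2) R hR).
  - intros e'; unfold P, ball, bex; simpl. rewrite eval_ren.
    assert (hRe : forall (w x b : K), R (fun v => scons w (scons x (scons b e')) (skip_vars 2 2 v))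
                                     <-> R (scons w (scons x (fun v => e' (S v)))))
      by (intros; apply (definable_env_ext K (Pi k)); auto; intros [|[|v]]; reflexivity).
    now setoid_rewrite hRe. }
assert (Hz : forall z, P (scons z e)).
{ apply (ISigma_induction (S k)); auto; unfold P; simpl.
  - intros _. exists zero. intros x hx. now apply not_lt_0 in hx.
  - intros z IH hz1. destruct IH as [b hb]; [eapply le_trans; [apply le_add_r|exact hz1]|].
    destruct (H z) as [w0 hw0]; [eapply lt_le_trans; [apply lt_succ_diag_r|exact hz1]|].
    exists (add b (add w0 one)). intros x hx.
    destruct (lt_succ_r _ _ hx) as [hx' | ->].
    + destruct (hb x hx') as (w & hw & hw'). exists w; split; auto.
      eapply lt_le_trans; [exact hw|apply le_add_r].
    + exists w0; split; auto. apply lt_add_succ_r. }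
apply (Hz (eval e t)), le_refl.
Qed.

Lemma Sigma_succ_bounded_closed k : S k <= n -> bounded_closed K (Pi k) ->
  bounded_closed K (Sigma (S k)).
Proof.
intros hk hPi t Q hQ.
destruct (Sigma_succ_contract k hPi Q hQ) as (R & hR & hQR).
assert (hswap : forall (x w : K) e,
    R (fun v => scons x (scons w e) (swap01 v)) <-> R (scons w (scons x e)))
  by (intros; apply (definable_env_ext K (Pi k)); auto; intros [|[|v]]; reflexivity).
assert (hskip : forall (w x b : K) e, R (fun v => scons w (scons x (scons b e)) (skip_vars 2 1 v))
                                     <-> R (scons w (scons x e)))
  by (intros; apply (definable_env_ext K (Pi k)); auto; intros [|[|v]]; reflexivity).
split.
- eapply definable_ext.
  + apply Sigma_ex, Sigma_of_Pi, (bounded_closed_bex K _ (ren_term S t)); auto.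
    exact (Pi_definable_ren K k swap01 R hR).
  + intros e; unfold bex; simpl. setoid_rewrite eval_ren. setoid_rewrite hswap.
    setoid_rewrite hQR. firstorder.
- eapply definable_ext.
  + apply Sigma_ex, Sigma_of_Pi, (bounded_closed_ball K _ (ren_term S t)); [exact hPi|].
    apply (bounded_closed_bex K _ (Var 1)); [exact hPi|].
    exact (Pi_definable_ren K k (skip_vars 2 1) R hR).
  + intros e; unfold ball, bex; simpl. setoid_rewrite eval_ren. setoid_rewrite hskip.
    setoid_rewrite hQR. split.
    * intros (b & hb) x hx. destruct (hb x hx) as (w & _ & hw). eauto.
    * apply (Sigma_collection k R hk hPi hR t e).
Qed.

Lemma Sigma_Pi_bounded_closed k : k <= n ->
  bounded_closed K (Sigma k) /\ bounded_closed K (Pi k).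
Proof.
induction k as [|k IH]; intros hk.
- assert (hS : bounded_closed K (Sigma 0)).
  { intros t Q hQ. rewrite !Sigma_0_definable in *. now apply Delta0_bounded_closed. }
  split; auto. now apply Pi_bounded_closed_dual.
- assert (hS : bounded_closed K (Sigma (S k))).
  { apply Sigma_succ_bounded_closed; auto. apply IH; lia. }
  split; auto. now apply Pi_bounded_closed_dual.
Qed.

Lemma Sigma_bex k t Q : k <= n -> definable K (Sigma k) Q -> definable K (Sigma k) (bex t Q).
Proof. intros hk. apply bounded_closed_bex, Sigma_Pi_bounded_closed, hk. Qed.

Lemma Pi_bex k t Q : k <= n -> definable K (Pi k) Q -> definable K (Pi k) (bex t Q).
Proof. intros hk. apply bounded_closed_bex, Sigma_Pi_bounded_closed, hk. Qed.

Lemma Pi_ball k t Q : k <= n -> definable K (Pi k) Q -> definable K (Pi k) (ball t Q).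
Proof. intros hk. apply bounded_closed_ball, Sigma_Pi_bounded_closed, hk. Qed.

Lemma Sigma_contract k Q : k <= n -> definable K (Sigma (S k)) Q ->
  exists R, definable K (Pi k) R /\ forall e, Q e <-> exists w, R (scons w e).
Proof. intros hk. apply Sigma_succ_contract, Sigma_Pi_bounded_closed, hk. Qed.

(* Pi_k induction by a downward Sigma_k induction: a counterexample [x0] is
   pushed down to [0] along [u + z = x0]. *)
Lemma Pi_induction k Q : k <= n -> definable K (Pi k) Q -> forall e,
  Q (scons zero e) -> (forall x, Q (scons x e) -> Q (scons (add x one) e)) ->
  forall x, Q (scons x e).
Proof.
intros hk hQ e H0 HS x0. apply NNPP; intros hx0.
set (P := fun e' : nat -> K => le (e' 0) (e' 1) -> exists u, lt u (add (e' 1) one) /\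
  add u (e' 0) = e' 1 /\ ~ Q (scons u (fun v => e' (S (S v))))).
assert (hP : definable K (Sigma k) P).
{ eapply definable_ext.
  - apply Sigma_imp_Delta0; [apply (Delta0_le K (Var 0) (Var 1))|].
    apply (Sigma_bex k (Add (Var 1) One)); auto.
    apply Sigma_and_Delta0; [apply (Delta0_eq K (Add (Var 0) (Var 1)) (Var 2))|].
    exact (Pi_not K k _ (Pi_definable_ren K k (skip_vars 1 2) Q hQ)).
  - intros e'; unfold P, bex; simpl.
    assert (hQe : forall u : K, Q (fun v => scons u e' (skip_vars 1 2 v))
                               <-> Q (scons u (fun v => e' (S (S v)))))
      by (intros; apply (definable_env_ext K (Pi k)); auto; intros [|v]; reflexivity).
    now setoid_rewrite hQe. }
assert (Hz : forall z, P (scons z (scons x0 e))).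
{ apply (ISigma_induction k); auto; unfold P; simpl.
  - intros _. exists x0. repeat split; auto using lt_succ_diag_r. ring.
  - intros z IH hz1. destruct IH as (u & hu & hux & hQu).
    { eapply le_trans; [apply le_add_r|exact hz1]. }
    destruct (le_0_l u) as [hu0|<-].
    + destruct (pos_succ u hu0) as [u' ->]. exists u'. repeat split.
      * eapply lt_trans; [apply lt_succ_diag_r|exact hu].
      * rewrite <- hux; ring.
      * intros hQu'. now apply hQu, HS.
    + exfalso. apply (le_not_lt _ _ hz1).
      rewrite <- hux, (SRadd_0_l PAminus_semiring). apply lt_succ_diag_r. }
destruct (Hz x0 (le_refl x0)) as (u & _ & hux & hQu); simpl in hux, hQu.
replace u with (@zero K) in hQu; auto.
apply (add_cancel_r _ _ x0). rewrite hux; ring.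
Qed.

End Hierarchy.

Lemma ISigma_IDelta0 n (K : structure) : ISigma n K -> IDelta0 K.
Proof.
intros [HK Hind]. split; auto. intros p hp. apply Hind, (Sigma_le 0); auto; lia.
Qed.

(** * Binary expansions *)

Section Binary.
Variable K : structure.
Hypothesis HK0 : IDelta0 K.
Let HK : PAminus K := proj1 HK0.
Existing Instance HK.
Add Ring K_ring0 : (@PAminus_semiring K HK).
Variable E : formula.
Hypothesis hE : ExpFormula E.
Hypothesis hG : ExpGraph K E.
Hypothesis hT : ExpTotal K E.

Lemma Delta0_exp_at i j : definable K isDelta0 (fun e => Exp_at E (e i) (e j)).
Proof.
exists (ren (fun v => match v with 0 => i | 1 => j | _ => 0 end) E).
split; [apply Delta0_ren, hE|]. intros e. rewrite sat_ren.
apply (sat_agree K E 2); [apply hE|]. intros [|[|v]] hv; simpl; auto; lia.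
Qed.

Lemma Delta0_bit i j : definable K isDelta0 (fun e => bitin E (e i) (e j)).
Proof.
eapply definable_ext.
- apply (Delta0_bex K (Add (Var j) One)).
  apply Delta0_and; [apply (Delta0_exp_at (S i) 0)|].
  apply (Delta0_bex K (Add (Var (S j)) One)), (Delta0_bex K (Var 1)).
  apply (Delta0_eq K (Var (3 + j)) (Add (Add (Mul (Var 1) (Add (Var 2) (Var 2))) (Var 2)) (Var 0))).
- intros e; unfold bex, bitin; simpl. split.
  + intros (p & _ & hp & q & _ & r & hr & ec). eauto 6.
  + intros (p & hp & q & r & ec & hr).
    assert (hp0 : lt zero p) by (eapply le_lt_trans; [apply le_0_l|exact hr]).
    exists p; split.
    { apply le_lt_succ. rewrite ec. eapply le_trans; [|apply le_add_r]. apply le_add_l. }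
    split; auto. exists q; split.
    { apply le_lt_succ. rewrite ec. do 2 (eapply le_trans; [|apply le_add_r]).
      apply le_mul_pos_r. eapply lt_le_trans; [exact hp0|apply le_add_r]. }
    eauto.
Qed.

Lemma exp_unique (x p p' : K) : Exp_at E x p -> Exp_at E x p' -> p = p'.
Proof. apply hG. Qed.

(* The candidate values of [2^y] are bounded by the parameter [e 1], which
   makes this Delta_0. *)
Lemma Delta0_exp_dvd : definable K isDelta0 (fun e => forall p, lt p (add (e 1) one) ->
  Exp_at E (e 0) p -> lt zero p /\ forall x, lt x (e 0) -> exists k, lt k (add p one) /\
    exists q, lt q (add p one) /\ Exp_at E x q /\ p = mul k (add q q)).
Proof.
eapply definable_ext.
- apply (Delta0_ball K (Add (Var 1) One)), Delta0_imp; [apply (Delta0_exp_at 1 0)|].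
  apply Delta0_and; [apply (Delta0_lt K Zero (Var 0))|].
  apply (Delta0_ball K (Var 1)), (Delta0_bex K (Add (Var 1) One)), (Delta0_bex K (Add (Var 2) One)).
  apply Delta0_and; [apply (Delta0_exp_at 2 0)|].
  apply (Delta0_eq K (Var 3) (Mul (Var 1) (Add (Var 0) (Var 0)))).
- intros e; unfold ball, bex; simpl. reflexivity.
Qed.

Lemma exp_pos_dvd (y p : K) : Exp_at E y p ->
  lt zero p /\ forall x, lt x y -> exists k q, Exp_at E x q /\ p = mul k (add q q).
Proof.
intros hp.
assert (H : forall z p', lt p' (add p one) -> Exp_at E z p' -> lt zero p' /\
  forall x, lt x z -> exists k, lt k (add p' one) /\
    exists q, lt q (add p' one) /\ Exp_at E x q /\ p' = mul k (add q q)).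
{ intros z. refine (ISigma_induction K 0 HK0 0 _ (le_n 0)
    (proj2 (Sigma_0_definable K _) Delta0_exp_dvd) (scons p (fun _ => zero)) _ _ z); simpl.
  - intros p' _ h. rewrite (exp_unique _ _ _ h (proj1 hG)). split; [apply lt_0_1|].
    intros x hx; now apply not_lt_0 in hx.
  - intros z' IH p' hp' h.
    destruct (hT z') as [p0 hp0].
    assert (ep : p' = add p0 p0) by (eapply exp_unique; [exact h|apply hG, hp0]).
    destruct (IH p0) as [hpos hall]; auto.
    { apply le_lt_succ. apply lt_succ_r in hp'. eapply le_trans; [|exact hp'].
      rewrite ep; apply le_add_r. }
    split; [rewrite ep; eapply lt_le_trans; [exact hpos|apply le_add_r]|].
    intros x hx. destruct (lt_succ_r _ _ hx) as [hx' | ->].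
    + destruct (hall x hx') as (k & hk & q & hq & hxq & ek).
      exists (add k k); split.
      { rewrite ep. apply le_lt_succ, add_le_mono; now apply lt_succ_r. }
      exists q; split; [|split; auto; rewrite ep, ek; ring].
      apply le_lt_succ. eapply le_trans; [apply lt_succ_r, hq|]. rewrite ep; apply le_add_r.
    + exists one; split.
      { apply le_lt_succ, pos_ge_1. rewrite ep.
        eapply lt_le_trans; [exact hpos|apply le_add_r]. }
      exists p0; split; [apply le_lt_succ; rewrite ep; apply le_add_r|].
      split; auto. rewrite ep; ring. }
destruct (H y p) as [hpos hall]; [apply lt_succ_diag_r|exact hp|].
split; auto. intros x hx. destruct (hall x hx) as (k & _ & q & _ & hq & ek). eauto.
Qed.

Lemma exp_pos (x p : K) : Exp_at E x p -> lt zero p.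
Proof. intros h. now apply (exp_pos_dvd x p). Qed.

Lemma exp_dvd (x y q p : K) : lt x y -> Exp_at E x q -> Exp_at E y p ->
  exists k, p = mul k (add q q).
Proof.
intros hxy hq hp. destruct (proj2 (exp_pos_dvd y p hp) x hxy) as (k & q' & hq' & ek).
rewrite (exp_unique _ _ _ hq hq'). eauto.
Qed.

Lemma div_mod (d : K) : lt zero d -> forall c, exists q r, c = add (mul q d) r /\ lt r d.
Proof.
intros hd.
set (P := fun e : nat -> K => exists q, lt q (add (e 0) one) /\
  exists r, lt r (e 1) /\ e 0 = add (mul q (e 1)) r).
assert (hP : definable K (Sigma 0) P).
{ apply Sigma_0_definable. eapply definable_ext.
  - apply (Delta0_bex K (Add (Var 0) One)).
    apply (Delta0_bex K (Var 2)).
    apply (Delta0_eq K (Var 2) (Add (Mul (Var 1) (Var 3)) (Var 0))).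
  - intros e; unfold P, bex; simpl. reflexivity. }
assert (H : forall c, P (scons c (scons d (fun _ => zero)))).
{ apply (ISigma_induction K 0 HK0 0); auto; unfold P; simpl.
  - exists zero; split; [apply lt_0_succ|]. exists zero; split; auto. ring.
  - intros c (q & hq & r & hr & ec).
    assert (hqc : le q c) by (rewrite ec; eapply le_trans; [apply le_mul_pos_r, hd|apply le_add_r]).
    destruct (le_succ_l _ _ hr) as [h | h].
    + exists q; split; [apply lt_lt_succ, le_lt_succ, hqc|].
      exists (add r one); split; auto. rewrite ec; ring.
    + exists (add q one); split; [apply le_lt_succ, add_le_mono_r, hqc|].
      exists zero; split; auto. rewrite ec, <- h. ring. }
intros c. destruct (H c) as (q & _ & r & hr & ec). eauto.
Qed.

Lemma lt_mul_add (s k u d : K) : lt s k -> lt u d -> lt (add (mul s d) u) (mul k d).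
Proof.
intros hs hu. eapply lt_le_trans; [apply add_lt_mono_l, hu|].
replace (add (mul s d) d) with (mul (add s one) d) by ring.
now apply mul_le_mono_r, le_succ_l.
Qed.

Lemma lt_mul_add_cancel (q r k d : K) : lt (add (mul q d) r) (mul k d) -> lt q k.
Proof.
intros h. destruct (le_gt_cases k q) as [hk|hk]; auto. exfalso.
apply (le_not_lt _ _ (mul_le_mono_r _ _ d hk)). eapply le_lt_trans; [apply le_add_r|exact h].
Qed.

Lemma div_unique (q r q' r' d : K) :
  add (mul q d) r = add (mul q' d) r' -> lt r d -> lt r' d -> q = q' /\ r = r'.
Proof.
intros h hr hr'.
assert (hq : forall q r q' r', add (mul q d) r = add (mul q' d) r' -> lt r d -> ~ lt q q').
{ intros a b a' b' hab hb ha. apply (lt_irrefl (add (mul a d) b)).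
  rewrite hab at 2. eapply lt_le_trans; [apply lt_mul_add; eauto|].
  apply le_add_r. }
destruct (lt_trichotomy q q') as [l|[<-|l]].
- now destruct (hq _ _ _ _ h hr).
- split; auto. eapply add_cancel_l; eauto.
- symmetry in h. now destruct (hq _ _ _ _ h hr').
Qed.

Lemma not_bit_0 (x : K) : ~ bitin E x zero.
Proof.
intros (p & hp & q & r & e & hr). apply (le_not_lt p zero); [|exact (exp_pos _ _ hp)].
rewrite e. eapply le_trans; [|apply le_add_r]. apply le_add_l.
Qed.

Lemma not_bit_div (x p c : K) : Exp_at E x p -> ~ bitin E x c ->
  exists q r, c = add (mul q (add p p)) r /\ lt r p.
Proof.
intros hp hb. assert (hp0 := exp_pos _ _ hp).
destruct (div_mod (add p p) (lt_le_trans _ _ _ hp0 (le_add_r p p)) c) as (q & r0 & e & hr0).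
destruct (le_gt_cases p r0) as [h|h]; eauto.
exfalso. apply hb. destruct (le_exists_add _ _ h) as [r er].
exists p; split; auto. exists q, r. split.
- rewrite e, <- er; ring.
- apply (add_lt_cancel_r _ _ p). rewrite (SRadd_comm PAminus_semiring r p), er. exact hr0.
Qed.

Lemma bit_set_lt_exp (a P c x p : K) : Exp_at E a P -> lt c P -> lt x a -> Exp_at E x p ->
  ~ bitin E x c -> lt (add c p) P.
Proof.
intros hP hc hx hp hb. destruct (exp_dvd _ _ _ _ hx hp hP) as [k ->].
destruct (not_bit_div _ _ _ hp hb) as (q & r & -> & hr).
replace (add (add (mul q (add p p)) r) p) with (add (mul q (add p p)) (add r p)) by ring.
apply lt_mul_add; [eapply lt_mul_add_cancel; exact hc|now apply add_lt_mono_r].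
Qed.

(* [p] is a multiple of [2 py], so subtracting it only lowers the quotient of
   the division by [2 py]. *)
Lemma bit_set_other_below (x p c y : K) : Exp_at E x p -> lt y x ->
  bitin E y (add c p) -> bitin E y c.
Proof.
intros hp hyx (py & hpy & Q & R & e & hR).
destruct (exp_dvd _ _ _ _ hyx hpy hp) as [k ek].
assert (hkQ : le k Q).
{ apply not_lt_le. intros hQk. apply (lt_irrefl (add c p)). eapply lt_le_trans.
  - rewrite e at 1.
    replace (add (add (mul Q (add py py)) py) R) with (add (mul Q (add py py)) (add R py)) by ring.
    apply lt_mul_add; [exact hQk|now apply add_lt_mono_r].
  - rewrite <- ek. apply le_add_l. }
destruct (le_exists_add _ _ hkQ) as [Q' <-]. exists py; split; auto. exists Q', R; split; auto.
apply (add_cancel_r _ _ p). rewrite e, ek. ring.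
Qed.

(* Divide [c] by [2 py] and the remainder [S] by [2 p]: adding [p] only
   changes the second remainder, and [S + p] stays below [2 py]. *)
Lemma bit_set_other_above (x p c y : K) : Exp_at E x p -> ~ bitin E x c -> lt x y ->
  bitin E y (add c p) -> bitin E y c.
Proof.
intros hp hb hxy (py & hpy & Q & R & e & hR).
destruct (exp_dvd _ _ _ _ hxy hp hpy) as [k ek].
assert (hp2 : lt zero (add p p)) by (eapply lt_le_trans; [apply (exp_pos _ _ hp)|apply le_add_r]).
assert (hpy2 : lt zero (add py py))
  by (eapply lt_le_trans; [apply (exp_pos _ _ hpy)|apply le_add_r]).
assert (e2 : add py py = mul (add k k) (add p p)) by (rewrite ek; ring).
destruct (not_bit_div _ _ _ hp hb) as (q & r & ec & hr).
destruct (div_mod _ hpy2 c) as (Q' & S & eS & hS).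
destruct (div_mod _ hp2 S) as (s & r' & eS' & hr').
assert (r' = r) as ->.
{ refine (proj2 (div_unique (add (mul Q' (add k k)) s) r' q r (add p p) _ hr' _)).
  - rewrite <- ec, eS, eS', e2. ring.
  - eapply lt_le_trans; [exact hr|apply le_add_r]. }
assert (hSp : add S p = add (mul s (add p p)) (add r p)) by (rewrite eS'; ring).
assert (hs : lt s (add k k))
  by (apply (lt_mul_add_cancel _ r _ (add p p)); now rewrite <- eS', <- e2).
destruct (div_unique Q' (add S p) Q (add py R) (add py py)) as [<- eSR].
- transitivity (add c p); [rewrite eS; ring|rewrite e; ring].
- rewrite hSp, e2. apply lt_mul_add; [exact hs|now apply add_lt_mono_r].
- rewrite (SRadd_comm PAminus_semiring py R). now apply add_lt_mono_r.
- assert (hSge : le py S).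
  { apply not_lt_le. intros hSl. apply (lt_irrefl (add S p)). eapply lt_le_trans.
    - rewrite hSp at 1. apply lt_mul_add; [|now apply add_lt_mono_r].
      apply (lt_mul_add_cancel _ r _ (add p p)). now rewrite <- eS', <- ek.
    - rewrite <- ek, eSR. apply le_add_r. }
  destruct (le_exists_add _ _ hSge) as [R'' <-].
  exists py; split; auto. exists Q', R''. split; [rewrite eS; ring|].
  assert (eR : R = add R'' p) by (apply (add_cancel_l _ _ py); rewrite <- eSR; ring).
  eapply le_lt_trans; [|exact hR]. rewrite eR. apply le_add_r.
Qed.

Lemma bit_set_other (x p c y : K) : Exp_at E x p -> ~ bitin E x c -> y <> x ->
  bitin E y (add c p) -> bitin E y c.
Proof.
intros hp hb hyx. destruct (lt_trichotomy y x) as [h|[h|h]].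
- now apply (bit_set_other_below x p).
- contradiction.
- now apply (bit_set_other_above x p).
Qed.

End Binary.

(** * End extensions *)

Section EndExtension.
Variables (M K : structure) (f : M -> K).
Hypothesis Hf : end_extension M K f.

Lemma end_extension_eval (e : nat -> M) t : f (eval e t) = eval (fun v => f (e v)) t.
Proof. destruct Hf as (_ & h0 & h1 & ha & hm & _). induction t; simpl; congruence. Qed.

Lemma end_extension_Delta0 p : isDelta0 p ->
  forall e : nat -> M, sat e p <-> sat (fun v => f (e v)) p.
Proof.
destruct Hf as (hinj & _ & _ & _ & _ & hlt & hinit).
assert (hcons : forall (x : M) e, forall v, scons (f x) (fun v => f (e v)) v = f (scons x e v))
  by (intros x e [|v]; reflexivity).
induction p; simpl; intros hp e; rewrite <- ?end_extension_eval; try tauto.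
- split; [congruence|apply hinj].
- apply hlt.
- rewrite IHp; tauto.
- rewrite IHp1, IHp2; tauto.
- rewrite IHp1, IHp2; tauto.
- rewrite IHp1, IHp2; tauto.
- split.
  + intros H y hy. destruct (hinit _ _ hy) as [x <-]. apply hlt in hy.
    rewrite (sat_ext K p _ _ (hcons x e)), <- IHp; auto.
  + intros H x hx. rewrite IHp, <- (sat_ext K p _ _ (hcons x e)); auto. apply H, hlt, hx.
- split.
  + intros (x & hx & H). exists (f x). rewrite (sat_ext K p _ _ (hcons x e)), <- IHp, <- hlt; auto.
  + intros (y & hy & H). destruct (hinit _ _ hy) as [x <-]. exists x.
    rewrite IHp, hlt, <- (sat_ext K p _ _ (hcons x e)); auto.
Qed.

Lemma end_extension_succ (a : M) : f (add a one) = add (f a) one.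
Proof. destruct Hf as (_ & _ & h1 & ha & _). now rewrite ha, h1. Qed.

Lemma end_extension_exp E (a m : M) : ExpFormula E -> Exp_at E a m -> Exp_at E (f a) (f m).
Proof.
intros hE h. unfold Exp_at in *.
rewrite (end_extension_Delta0 E (proj1 hE)) in h. revert h. apply sat_ext.
destruct Hf as (_ & h0 & _). intros [|[|v]]; simpl; auto.
Qed.

Lemma M_ISigma_induction k Q : M_ISigma k M K f -> definable K (Sigma k) Q ->
  forall e a, Q (scons zero e) ->
  (forall x, lt x (f a) -> Q (scons x e) -> Q (scons (add x one) e)) ->
  forall x, lt x (f a) -> Q (scons x e).
Proof.
intros HI (p & hp & h) e a H0 HS x hx. apply h, (HI p hp e a); auto; [now apply h|].
intros y hy hy'. now apply h, HS, h.
Qed.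

Context {HK : PAminus K}.

(* Otherwise Sigma_{k+1} induction up to the bound shows that the set has
   elements above every point below the bound. *)
Lemma M_ISigma_maximum k Q : M_ISigma (S k) M K f -> definable K (Sigma (S k)) Q ->
  forall e (m : M) c0, Q (scons c0 e) -> (forall c, Q (scons c e) -> lt c (f m)) ->
  exists c, Q (scons c e) /\ forall c', Q (scons c' e) -> ~ lt c c'.
Proof.
intros HI hQ e m c0 hc0 hbound. apply NNPP; intros Hnomax.
assert (Hup : forall c, Q (scons c e) -> exists c', Q (scons c' e) /\ lt c c').
{ intros c hc. apply NNPP; intros h. apply Hnomax. exists c; split; auto.
  intros c' hc' hlt. apply h; eauto. }
set (P := fun e' : nat -> K => exists c, le (e' 0) c /\ Q (scons c (fun v => e' (S v)))).
assert (hP : definable K (Sigma (S k)) P).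
{ eapply definable_ext.
  - apply Sigma_ex, Sigma_and_Delta0; [apply (Delta0_le K (Var 1) (Var 0))|].
    exact (Sigma_definable_ren K (S k) (skip_vars 1 1) Q hQ).
  - intros e'; unfold P; simpl.
    assert (hQe : forall c : K, Q (fun v => scons c e' (skip_vars 1 1 v))
                               <-> Q (scons c (fun v => e' (S v))))
      by (intros; apply (definable_env_ext K (Sigma (S k))); auto; intros [|v]; reflexivity).
    now setoid_rewrite hQe. }
assert (Hz : forall z, lt z (f (add m one)) -> P (scons z e)).
{ apply (M_ISigma_induction (S k)); auto; unfold P; simpl.
  - exists c0; split; auto. apply le_0_l.
  - intros z _ (c & hzc & hc). destruct (Hup c hc) as (c' & hc' & hcc').
    exists c'; split; auto. apply le_succ_l. eapply le_lt_trans; eauto. }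
rewrite end_extension_succ in Hz.
destruct (Hz (f m) (lt_succ_diag_r _)) as (c & hmc & hc).
exact (le_not_lt _ _ hmc (hbound c hc)).
Qed.

End EndExtension.

(** * Coding, collection and M-induction *)

Section Main.
Variables (n : nat) (M K : structure) (f : M -> K) (E : formula).
Hypothesis hE : ExpFormula E.
Hypothesis hTM : ExpTotal M E.
Hypothesis HKn : ISigma n K.
Hypothesis hG : ExpGraph K E.
Hypothesis hT : ExpTotal K E.
Hypothesis Hf : end_extension M K f.
Let HK : PAminus K := proj1 HKn.
Existing Instance HK.
Let HK0 : IDelta0 K := ISigma_IDelta0 n K HKn.

Lemma Sigma_bits_witnessed th : Pi n th ->
  definable K (Sigma (S n)) (fun e => lt (e 0) (e 1) /\ exists b, forall x, lt x (e 2) ->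
    bitin E x (e 0) -> exists y, lt y b /\ sat (scons y (scons x (fun v => e (3 + v)))) th).
Proof.
intros hth. eapply definable_ext.
- apply Sigma_and_Delta0; [apply (Delta0_lt K (Var 0) (Var 1))|].
  apply Sigma_ex, Sigma_of_Pi, (Pi_ball K n HKn n (Var 3)); auto.
  apply Pi_imp_Delta0; [apply (Delta0_bit K HK0 E hE 0 2)|].
  apply (Pi_bex K n HKn n (Var 1)); auto.
  exact (Pi_definable_ren K n (skip_vars 2 4) _ (definable_sat K (Pi n) th hth)).
- intros e; unfold ball, bex; simpl.
  assert (he : forall y x b : K, sat (fun v => scons y (scons x (scons b e)) (skip_vars 2 4 v)) th
                                <-> sat (scons y (scons x (fun v => e (3 + v)))) th)
    by (intros; apply sat_ext; intros [|[|v]]; reflexivity).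
  now setoid_rewrite he.
Qed.

Lemma M_ISigma_bit_collection th : M_ISigma (S n) M K f -> Pi n th -> forall env (a : M),
  exists c b, forall x, lt x (f a) ->
    (bitin E x c -> exists y, lt y b /\ sat (scons y (scons x env)) th) /\
    ((exists y, sat (scons y (scons x env)) th) -> bitin E x c).
Proof.
intros HI hth env a. destruct (hTM a) as [m hm].
apply (end_extension_exp M K f Hf E a m hE) in hm.
destruct (M_ISigma_maximum M K f Hf n _ HI (Sigma_bits_witnessed th hth)
            (scons (f m) (scons (f a) env)) m zero) as (c & (hcm & b & hb) & hmax); simpl.
- split; [apply (exp_pos K HK0 E hE hG hT _ _ hm)|].
  exists zero. intros x _ hx. now apply (not_bit_0 K HK0 E hE hG hT) in hx.
- now intros c [hc _].
- exists c, b. intros x hx. split; [now apply hb|].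
  intros [y0 hy0]. apply NNPP; intros hnb.
  destruct (hT x) as [p hp].
  apply (hmax (add c p)); [|apply lt_add_pos_r, (exp_pos K HK0 E hE hG hT _ _ hp)].
  split; [apply (bit_set_lt_exp K HK0 E hE hG hT (f a) (f m) c x p); auto|].
  exists (add b (add y0 one)). intros x' hx' hbit.
  destruct (classic (x' = x)) as [-> | hne].
  + exists y0; split; [apply lt_add_succ_r|exact hy0].
  + destruct (hb x' hx') as (y & hy & hy');
      [exact (bit_set_other K HK0 E hE hG hT x p c x' hp hnb hne hbit)|].
    exists y; split; [eapply lt_le_trans; [exact hy|apply le_add_r]|exact hy'].
Qed.

Definition M_Sigma_coded : Prop :=
  forall p, Sigma (S n) p -> forall (env : nat -> K) (a : M),
    exists c, forall x, lt x (f a) -> (sat (scons x env) p <-> bitin E x c).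

Definition M_Pi_collection : Prop :=
  forall th, Pi n th -> forall (env : nat -> K) (a : M),
    exists b, forall x, lt x (f a) ->
      ((exists y, sat (scons y (scons x env)) th) <->
       (exists y, lt y b /\ sat (scons y (scons x env)) th)).

Lemma Sigma_succ_as_ex_Pi p : Sigma (S n) p ->
  exists th, Pi n th /\ forall e : nat -> K, sat e p <-> exists w, sat (scons w e) th.
Proof.
intros hp.
destruct (Sigma_contract K n HKn n _ (le_n n) (definable_sat K _ p hp))
  as (R & (th & hth & hR) & hpR).
exists th; split; auto. intros e. rewrite hpR. now setoid_rewrite hR.
Qed.

Lemma M_ISigma_coded : M_ISigma (S n) M K f -> M_Sigma_coded.
Proof.
intros HI p hp env a. destruct (Sigma_succ_as_ex_Pi p hp) as (th & hth & hpth).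
destruct (M_ISigma_bit_collection th HI hth env a) as (c & b & hcb).
exists c. intros x hx. rewrite hpth. destruct (hcb x hx) as [hbit hwit]. split; auto.
intros h. destruct (hbit h) as (y & _ & hy). eauto.
Qed.

Lemma M_ISigma_collection : M_ISigma (S n) M K f -> M_Pi_collection.
Proof.
intros HI th hth env a. destruct (M_ISigma_bit_collection th HI hth env a) as (c & b & hcb).
exists b. intros x hx. destruct (hcb x hx) as [hbit hwit]. split; auto.
intros (y & _ & hy). eauto.
Qed.

Lemma coded_M_ISigma : M_Sigma_coded -> M_ISigma (S n) M K f.
Proof.
intros Hcode p hp env a h0 hs x hx.
destruct (Hcode p hp env a) as [c hc].
set (P := fun e : nat -> K => lt (e 0) (e 1) -> bitin E (e 0) (e 2)).
assert (hP : definable K (Sigma 0) P).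
{ apply Sigma_0_definable, Delta0_imp; [apply (Delta0_lt K (Var 0) (Var 1))|].
  apply (Delta0_bit K HK0 E hE 0 2). }
assert (Hz : forall z, P (scons z (scons (f a) (scons c env)))).
{ apply (ISigma_induction K n HKn 0); auto; [lia| |]; unfold P; simpl.
  - intros h. now apply hc.
  - intros z IH hz1. assert (hz : lt z (f a)) by now apply lt_succ_lt.
    apply hc; auto. apply hs; auto. now apply hc, IH. }
now apply hc, Hz.
Qed.

Lemma collection_M_ISigma : M_Pi_collection -> M_ISigma (S n) M K f.
Proof.
intros Hcoll p hp env a h0 hs.
destruct (Sigma_succ_as_ex_Pi p hp) as (th & hth & hpth).
destruct (Hcoll th hth env (add a one)) as [b hb]. rewrite end_extension_succ in hb; auto.
assert (hbnd : forall u, le u (f a) -> sat (scons u env) p <->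
                 exists w, lt w b /\ sat (scons w (scons u env)) th)
  by (intros u hu; rewrite hpth; apply hb, le_lt_succ, hu).
set (P := fun e : nat -> K => le (e 0) (e 1) ->
  exists w, lt w (e 2) /\ sat (scons w (scons (e 0) (fun v => e (3 + v)))) th).
assert (hP : definable K (Pi n) P).
{ eapply definable_ext.
  - apply Pi_imp_Delta0; [apply (Delta0_le K (Var 0) (Var 1))|].
    apply (Pi_bex K n HKn n (Var 2)); auto.
    exact (Pi_definable_ren K n (skip_vars 2 2) _ (definable_sat K (Pi n) th hth)).
  - intros e; unfold P, bex; simpl.
    assert (he : forall w : K, sat (fun v => scons w e (skip_vars 2 2 v)) th
                              <-> sat (scons w (scons (e 0) (fun v => e (3 + v)))) th)
      by (intros; apply sat_ext; intros [|[|v]]; reflexivity).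
    now setoid_rewrite he. }
assert (Hz : forall z, P (scons z (scons (f a) (scons b env)))).
{ apply (Pi_induction K n HKn n); auto; unfold P; simpl.
  - intros h. exact (proj1 (hbnd zero h) h0).
  - intros z IH hz1.
    assert (hz : lt z (f a)) by (eapply lt_le_trans; [apply lt_succ_diag_r|exact hz1]).
    apply (proj1 (hbnd _ hz1)), hs, (proj2 (hbnd z (lt_le_incl _ _ hz))), IH; auto.
    now apply lt_le_incl. }
intros x hx. apply (proj2 (hbnd x (lt_le_incl _ _ hx))), Hz, lt_le_incl, hx.
Qed.

End Main.

Theorem lemma4p5 (n : nat) (M K : structure) (f : M -> K) (E : formula) :
  ExpFormula E ->
  IDelta0 M -> ExpGraph M E -> ExpTotal M E ->
  ISigma n K -> ExpGraph K E -> ExpTotal K E ->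
  end_extension M K f ->
  let cond_i := M_ISigma (S n) M K f in
  let cond_ii :=
    forall (p : formula), Sigma (S n) p -> forall (env : nat -> K) (a : M),
      exists c : K, forall x : K, lt x (f a) ->
        (sat (scons x env) p <-> bitin E x c) in
  let cond_iii :=
    (* theta(x,y): y is de Bruijn variable 0, x is variable 1 *)
    forall (theta : formula), Pi n theta -> forall (env : nat -> K) (a : M),
      exists b : K, forall x : K, lt x (f a) ->
        ((exists y : K, sat (scons y (scons x env)) theta) <->
         (exists y : K, lt y b /\ sat (scons y (scons x env)) theta)) in
  (cond_i <-> cond_ii) /\ (cond_ii <-> cond_iii).
Proof.
intros hE _ _ hTM HKn hG hT Hf cond_i cond_ii cond_iii.
assert (i_ii : cond_i -> cond_ii) by exact (M_ISigma_coded n M K f E hE hTM HKn hG hT Hf).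
assert (ii_i : cond_ii -> cond_i) by exact (coded_M_ISigma n M K f E hE HKn).
assert (i_iii : cond_i -> cond_iii) by exact (M_ISigma_collection n M K f E hE hTM HKn hG hT Hf).
assert (iii_i : cond_iii -> cond_i) by exact (collection_M_ISigma n M K f HKn Hf).
tauto.
Qed.
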